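(* Let $\lambda_{\operatorname{gr}}\ge0$ and let $X=(V,E,T)$ be an $(s,k,K)$-two layer system whose ground graph is a $\lambda_{\operatorname{gr}}$-expander. Let $A\subseteq E$ be non-empty, $0<\mu<1$, and $U\subseteq V$ a set of vertices that are $\mu$-large with respect to $A$. For $0\le i\le k$ let $A^i_U=\{\tau\in A:|\tau\cap U|=i\}$. If $\frac{w(A)}{w(E)}\le\frac{4\mu^2}{s^3(s-1)^2}$, then $$\frac{s(s-1)(k-1)}{2\mu}\lambda_{\operatorname{gr}}+\frac{s^3(s-1)^2}{4\mu^2}\frac{w(A)}{w(E)}\ge\left(1-\frac{s(s-1)(k-1)}{2\mu}\lambda_{\operatorname{gr}}\right)\sum_{i=2}^k(i-1)\frac{w(A^i_U)}{w(A)}.$$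
   Context: Let $s,k,K$ be positive integers. An $(s,k,K)$-two layer system is a triple $X=(V,E,T)$ where: $V$ is a finite set; $E\subseteq 2^V$ with $|\tau|=k$ for all $\tau\in E$ and $\bigcup_{\tau\in E}\tau=V$; $T\subseteq 2^E$ with $|\sigma|=K$ for all $\sigma\in T$ and $\bigcup_{\sigma\in T}\sigma=E$. Write $v\in\sigma$ if $v\in\tau$ for some $\tau\in\sigma$; it is required that $2\le|\{\tau\in\sigma:v\in\tau\}|\le s$ for all $\sigma\in T$, $v\in\sigma$ (so $s\ge2$). A positive $w:T\to\mathbb{R}_{>0}$ is fixed and extended by $w(\tau)=\sum_{\sigma\ni\tau}w(\sigma)$ ($\tau\in E$), $w(v)=\sum_{\sigma\in T,v\in\sigma}w(\sigma)$, $w(B)=\sum_{\eta\in B}w(\eta)$. For $v\in V$, $E_v=\{\tau\in E:v\in\tau\}$; the link of $v$ is the graph on $E_v$ where distinct $\tau_1,\tau_2$ are adjacent iff some $\sigma\in T$ contains both, with weight $m_v(\{\tau_1,\tau_2\})=\sum_{\sigma\in T,\tau_1,\tau_2\in\sigma}w(\sigma)$; $m_v(\tau)$ is the sum of weights of link edges at $\tau$, $m_v(B)=\sum_{\tau\in B}m_v(\tau)$. For $A\subseteq E$, $A_v=A\cap E_v$, and $v$ is $\mu$-large w.r.t. $A$ if $m_v(A_v)/m_v(E_v)\ge\mu$. The ground graph of $X$ has vertex set $V$, distinct $u,v$ adjacent iff some $\tau\in E$ contains both, with weight $m_{\operatorname{gr}}(\{u,v\})=\sum_{\tau\in E,u,v\in\tau}w(\tau)$.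 For a weighted graph $(V,E,m)$: $m(v)=\sum_{e\ni v}m(e)$, $m(U)=\sum_{v\in U}m(v)$, $m(U_1,U_2)=\sum_{(u_1,u_2)\in U_1\times U_2,\{u_1,u_2\}\in E}m(\{u_1,u_2\})$, $h_G=\min_{\emptyset\ne U\subsetneq V}\frac{m(U,V\setminus U)m(V)}{m(U)m(V\setminus U)}$; $G$ is a $\lambda$-expander if $1-h_G\le\lambda$. *)

From mathcomp Require Import all_boot all_order all_algebra.
Set Implicit Arguments. Unset Strict Implicit. Unset Printing Implicit Defensive.
Import Order.TTheory GRing.Theory Num.Theory.
Local Open Scope ring_scope.

Section Graphs.
Variables (R : realFieldType) (T : finType).
(* A weighted graph with vertex set W : {set T}; m u v is the weight of the
   edge {u,v} (0 when there is no edge); loops are never counted. *)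
Definition gdeg (m : T -> T -> R) (W : {set T}) (v : T) : R :=
  \sum_(u in W | u != v) m v u.
Definition gvol (m : T -> T -> R) (W U : {set T}) : R :=
  \sum_(v in U) gdeg m W v.
Definition gcut (m : T -> T -> R) (U1 U2 : {set T}) : R :=
  \sum_(u1 in U1) \sum_(u2 in U2 | u1 != u2) m u1 u2.
(* 1 - h_G <= lam, with h_G the minimum over nonempty proper U of the ratio *)
Definition is_expander (m : T -> T -> R) (W : {set T}) (lam : R) : Prop :=
  forall U : {set T}, U \subset W -> U != set0 -> U != W ->
    1 - gcut m U (W :\: U) * gvol m W W / (gvol m W U * gvol m W (W :\: U))
      <= lam.
End Graphs.

Section TwoLayer.
Variables (R : realFieldType) (V : finType).
Implicit Types (E : {set {set V}}) (T : {set {set {set V}}}).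

Definition in_face (v : V) (sigma : {set {set V}}) : bool :=
  [exists tau in sigma, v \in tau].

Definition two_layer_system (s k K : nat) E T : Prop :=
  [/\ (0 < s)%N, (0 < k)%N & (0 < K)%N] /\
  [/\ (forall tau, tau \in E -> #|tau| = k),
      \bigcup_(tau in E) tau = [set: V],
      (forall sigma, sigma \in T -> sigma \subset E /\ #|sigma| = K),
      \bigcup_(sigma in T) sigma = E &
      (forall sigma v, sigma \in T -> in_face v sigma ->
         (2 <= #|[set tau in sigma | v \in tau]| <= s)%N)].

Definition wE T (w : {set {set V}} -> R) (tau : {set V}) : R :=
  \sum_(sigma in T | tau \in sigma) w sigma.
Definition wV T (w : {set {set V}} -> R) (v : V) : R :=
  \sum_(sigma in T | in_face v sigma) w sigma.
Definition wS T (w : {set {set V}} -> R) (B : {set {set V}}) : R :=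
  \sum_(tau in B) wE T w tau.

Definition Ev E (v : V) : {set {set V}} := [set tau in E | v \in tau].

Definition link_w T (w : {set {set V}} -> R) (t1 t2 : {set V}) : R :=
  \sum_(sigma in T | (t1 \in sigma) && (t2 \in sigma)) w sigma.

Definition mv E T w (v : V) (B : {set {set V}}) : R :=
  gvol (link_w T w) (Ev E v) B.

Definition mu_large E T w (A : {set {set V}}) (mu : R) (v : V) : Prop :=
  mv E T w v (A :&: Ev E v) / mv E T w v (Ev E v) >= mu.

Definition gr_w E T w (u v : V) : R :=
  \sum_(tau in E | (u \in tau) && (v \in tau)) wE T w tau.

Definition A_iU (A : {set {set V}}) (U : {set V}) (i : nat) : {set {set V}} :=
  [set tau in A | #|tau :&: U| == i].
End TwoLayer.

From mathcomp Require Import all_boot all_order all_algebra.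
From mathcomp Require Import ring lra zify.
Import Order.TTheory GRing.Theory Num.Theory.
Local Open Scope ring_scope.
Set Implicit Arguments. Unset Strict Implicit. Unset Printing Implicit Defensive.

(* Write n(tau) = |tau :&: U| and let P, Q and S be the w-weighted sums over A
   of n, n(n-1) and (n-1)^+, so that S = sum_i (i-1) w(A^i_U).  In a face, an
   edge at a vertex v meets between 1 and s-1 other edges at v, so mu-largeness
   of u in U gives mu w(E_u) <= (s-1) w(A_u); summing over U bounds the volume
   of U in the ground graph by c0 P, with c0 = (s-1)(k-1)/mu.  The expander
   mixing bound m(U,U) m(V) <= lam m(U) m(V) + m(U)^2, where m(V) = k(k-1) w(E)
   and m(U,U) >= Q, turns this into Q <= lam c0 P + h P^2 with h = c0^2/m(V).
   Cauchy-Schwarz gives P^2 <= w(A) (Q + P), and summing the elementary bound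
   (n-1)^+ + g n^2 <= n(n-1) + s g, valid for 0 <= g <= 1/s, at g = h w(A)
   yields S <= lam c0 (w(A) + S) + s h w(A)^2.  The smallness of w(A)/w(E) is
   exactly what makes g <= 1/s. *)

Lemma exchange_big_card (R : nmodType) (I J : finType) (P : pred I)
    (Q : I -> J -> bool) (F : J -> R) :
  \sum_(i | P i) \sum_(j | Q i j) F j = \sum_j F j *+ #|[set i | P i && Q i j]|.
Proof.
rewrite (exchange_big_dep xpredT) //=; apply: eq_bigr => j _.
by rewrite -sumr_const; apply: eq_bigl => i; rewrite inE.
Qed.

Lemma ler_sum_subset (R : numDomainType) (I : finType) (A B : {set I}) (F : I -> R) :
  A \subset B -> (forall i, i \in B -> 0 <= F i) ->
  \sum_(i in A) F i <= \sum_(i in B) F i.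
Proof.
move=> AB F_ge0; rewrite [leRHS](big_setID A) /= (setIidPr AB) lerDl.
by apply: sumr_ge0 => i /setDP[/F_ge0].
Qed.

Lemma cauchy_schwarz_weighted (R : realFieldType) (I : finType) (P : pred I)
    (a x : I -> R) :
  (forall i, P i -> 0 <= a i) ->
  (\sum_(i | P i) a i * x i) ^+ 2
    <= (\sum_(i | P i) a i) * \sum_(i | P i) a i * x i ^+ 2.
Proof.
move=> a_ge0.
set W := \sum_(i | P i) a i; set S1 := \sum_(i | P i) a i * x i.
set S2 := \sum_(i | P i) a i * x i ^+ 2.
have lagrange : \sum_(i | P i) \sum_(j | P j) a i * a j * (x i - x j) ^+ 2
    = 2 * (W * S2 - S1 ^+ 2).
  transitivity (\sum_(i | P i) (a i * x i ^+ 2 * W + a i * S2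
                                 - 2 * (a i * x i) * S1)).
    apply: eq_bigr => i _; rewrite /W /S1 /S2 !mulr_sumr -!big_split -sumrB /=.
    by apply: eq_bigr => j _; ring.
  by rewrite sumrB big_split /= -!mulr_suml -mulr_sumr -/W -/S1 -/S2; ring.
have : 0 <= 2 * (W * S2 - S1 ^+ 2).
  rewrite -lagrange; apply: sumr_ge0 => i Pi; apply: sumr_ge0 => j Pj.
  by rewrite mulr_ge0 ?sqr_ge0 ?mulr_ge0 ?a_ge0.
lra.
Qed.

Lemma natr_pred (R : pzRingType) n : (0 < n)%N -> n.-1%:R = n%:R - 1 :> R.
Proof. by case: n => // n _; rewrite mulrSr addrK. Qed.

Lemma muln_pred_add n : (n * n.-1 + n = n * n)%N.
Proof. by case: n => // n; rewrite mulnS addnC. Qed.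

Lemma predn_add_sqr_le (R : realFieldType) (s n : nat) (g : R) :
  (1 < s)%N -> 0 <= g -> g * s%:R <= 1 ->
  n.-1%:R + g * (n * n)%:R <= (n * n.-1)%:R + s%:R * g.
Proof.
move=> s_gt1 g_ge0 gs_le1; have s_ge2 : 2 <= s%:R :> R by rewrite (ler_nat R 2).
case: n => [|n]; first by rewrite muln0 mulr0 !add0r mulr_ge0 ?ler0n.
rewrite natrM /= -addn1 natrD; set x := n%:R.
have x_ge0 : 0 <= x := ler0n R n.
(* g ((x+1)^2 - s) <= x^2, using g s <= 1 and (x+1)^2 <= s (x^2 + 1) for s >= 2 *)
have [small | big] := lerP ((x + 1) ^+ 2) s%:R.
  have : g * ((x + 1) ^+ 2 - s%:R) <= 0 by rewrite mulr_ge0_le0 // subr_le0.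
  nra.
have : s%:R * g * ((x + 1) ^+ 2 - s%:R) <= (x + 1) ^+ 2 - s%:R.
  by rewrite -[leRHS]mul1r; apply: ler_wpM2r; [lra | rewrite mulrC].
have : 0 <= (x - 1) ^+ 2 := sqr_ge0 _.
nra.
Qed.

Section WeightedGraph.
Variables (R : realFieldType) (T : finType) (m : T -> T -> R).
Hypothesis m_ge0 : forall u v, 0 <= m u v.

Local Notation vol := (gvol m [set: T]).

Lemma gcut_ge0 U1 U2 : 0 <= gcut m U1 U2.
Proof. by do 2![apply: sumr_ge0 => ? _]. Qed.

Lemma gvol_ge0 U : 0 <= vol U.
Proof. by do 2![apply: sumr_ge0 => ? _]. Qed.

Lemma gvol_cut U : vol U = gcut m U U + gcut m U ([set: T] :\: U).
Proof.
rewrite /gvol /gcut -big_split /=; apply: eq_bigr => v _.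
rewrite /gdeg (bigID (mem U)) /=; congr (_ + _); apply: eq_bigl => u;
  by rewrite !inE /= ?andbT eq_sym andbC.
Qed.

Lemma gvol_setTD U : vol ([set: T] :\: U) = vol [set: T] - vol U.
Proof. by rewrite [X in _ = X - _](big_setID U) /= setTI addrAC subrr add0r. Qed.

Lemma expander_mixing lam U : 0 <= lam -> is_expander m [set: T] lam ->
  gcut m U U * vol [set: T] <= lam * vol U * vol [set: T] + vol U ^+ 2.
Proof.
move=> lam_ge0 hexp.
set I := gcut m U U; set C := gcut m U ([set: T] :\: U).
set M := vol U; set N := vol [set: T].
have volU : M = I + C := gvol_cut U.
have I_ge0 : 0 <= I := gcut_ge0 U U.
have C_ge0 : 0 <= C := gcut_ge0 U _.
have M_ge0 : 0 <= M := gvol_ge0 U.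
have M_le_N : M <= N by rewrite -subr_ge0 -gvol_setTD gvol_ge0.
have M2_ge0 : 0 <= M ^+ 2 := sqr_ge0 M.
have [lam_ge1 | lam_lt1] := lerP 1 lam.
  have : I * N <= lam * M * N by rewrite ler_wpM2r //; [lra | nra].
  lra.
have [U0 | U_neq0] := eqVneq U set0.
  by rewrite /I /gcut U0 big_set0 mul0r addr_ge0 ?sqr_ge0 ?mulr_ge0 ?gvol_ge0.
have [UT | U_neqT] := eqVneq U [set: T].
  have C0 : C = 0.
    by rewrite /C UT setDv /gcut big1 // => u _; apply: big_pred0 => v; rewrite inE.
  have MN : M = N by rewrite /M UT.
  nra.
have := hexp U (subsetT U) U_neq0 U_neqT; rewrite -/C -/N gvol_setTD -/M -/N.
have [MN0 | MN_neq0] := eqVneq (M * (N - M)) 0.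
  by rewrite MN0 invr0 mulr0 subr0 => /(lt_le_trans lam_lt1); rewrite ltxx.
have MN_gt0 : 0 < M * (N - M).
  by rewrite lt0r MN_neq0 mulr_ge0 // ?subr_ge0 // volU addr_ge0.
rewrite lerBlDr -lerBlDl ler_pdivlMr // => cut_ge.
have IN : I * N = M * N - C * N by rewrite volU; ring.
have : 0 <= lam * M ^+ 2 by rewrite mulr_ge0.
lra.
Qed.

End WeightedGraph.

Section TwoLayerSystem.
Variables (R : realFieldType) (V : finType) (s k K : nat).
Variables (E : {set {set V}}) (T : {set {set {set V}}}) (w : {set {set V}} -> R).
Hypothesis X_sys : two_layer_system s k K E T.
Hypothesis w_gt0 : forall sigma, sigma \in T -> 0 < w sigma.
Implicit Types (u v : V) (tau U : {set V}) (sigma B : {set {set V}}).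

Lemma card_edge tau : tau \in E -> #|tau| = k.
Proof. by case: X_sys => _ [hk _ _ _ _]; apply: hk. Qed.

Lemma face_subset sigma : sigma \in T -> sigma \subset E.
Proof. by case: X_sys => _ [_ _ hT _ _] /hT[]. Qed.

Lemma edge_in_face tau : tau \in E -> exists2 sigma, sigma \in T & tau \in sigma.
Proof. by case: X_sys => _ [_ _ _ <- _] /bigcupP[sigma]; exists sigma. Qed.

Lemma card_face_edges_through sigma tau v : sigma \in T -> tau \in sigma -> v \in tau ->
  (0 < #|[set t in sigma | v \in t] :\ tau| < s)%N.
Proof.
case: X_sys => _ [_ _ _ _ hdeg] sT tau_s v_tau.
have v_sigma : in_face v sigma by apply/existsP; exists tau; rewrite tau_s.
have := hdeg _ _ sT v_sigma; rewrite (cardsD1 tau) inE tau_s v_tau /=.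
by move: #|_ :\ _| => c; lia.
Qed.

Lemma wE_ge0 tau : 0 <= wE T w tau.
Proof. by apply: sumr_ge0 => sigma /andP[/w_gt0/ltW]. Qed.

Lemma wE_gt0 tau : tau \in E -> 0 < wE T w tau.
Proof.
case/edge_in_face => sigma sT tau_s; rewrite /wE (bigD1 sigma) ?sT //=.
by rewrite ltr_pwDl ?w_gt0 // sumr_ge0 // => sigma' /andP[/andP[/w_gt0/ltW]].
Qed.

Lemma wS_subset B B' : B \subset B' -> wS T w B <= wS T w B'.
Proof. by move=> BB'; apply: ler_sum_subset => // tau _; apply: wE_ge0. Qed.

Lemma wS_ge0 B : 0 <= wS T w B.
Proof. by apply: sumr_ge0 => tau _; apply: wE_ge0. Qed.

Lemma wS_gt0 B : B \subset E -> B != set0 -> 0 < wS T w B.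
Proof.
move=> BE /set0Pn[tau tau_B]; rewrite /wS (bigD1 tau) //=.
by rewrite ltr_pwDl ?wE_gt0 ?(subsetP BE) // sumr_ge0 // => ? _; apply: wE_ge0.
Qed.

Lemma gdeg_link u tau :
  gdeg (link_w T w) (Ev E u) tau
    = \sum_(sigma in T | tau \in sigma) w sigma *+ #|[set t in sigma | u \in t] :\ tau|.
Proof.
rewrite /gdeg /link_w exchange_big_card [RHS]big_mkcond /=; apply: eq_bigr => sigma _.
case: ifP => [/andP[sT tau_s] | tau_nsigma].
  congr (_ *+ _); apply: eq_card => t; rewrite !inE sT tau_s /=.
  case t_s: (t \in sigma); last by rewrite !andbF.
  by rewrite (subsetP (face_subset sT)) //= andbT andbC.
rewrite (_ : [set _ | _] = set0) ?cards0 //; apply/setP => t; rewrite !inE.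
by apply/negbTE; apply: contraFN tau_nsigma => /and4P[_ -> ->].
Qed.

Lemma mv_le_wS u B : B \subset Ev E u -> mv E T w u B <= wS T w B *+ s.-1.
Proof.
move=> B_u; rewrite /mv /gvol /wS -sumrMnl; apply: ler_sum => tau tau_B.
have u_tau : u \in tau by move: (subsetP B_u _ tau_B); rewrite inE => /andP[].
rewrite gdeg_link /wE -sumrMnl; apply: ler_sum => sigma /andP[sT tau_s].
apply: ler_wpMn2l; first exact/ltW/w_gt0.
by have := card_face_edges_through sT tau_s u_tau; lia.
Qed.

Lemma wS_le_mv u : wS T w (Ev E u) <= mv E T w u (Ev E u).
Proof.
rewrite /mv /gvol /wS; apply: ler_sum => tau; rewrite inE => /andP[_ u_tau].
rewrite gdeg_link /wE; apply: ler_sum => sigma /andP[sT tau_s].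
rewrite -[leLHS]mulr1n; apply: ler_wpMn2l; first exact/ltW/w_gt0.
by have := card_face_edges_through sT tau_s u_tau; lia.
Qed.

Lemma mu_large_wS A mu u : 0 < mu -> mu_large E T w A mu u ->
  mu * wS T w (Ev E u) <= wS T w (A :&: Ev E u) *+ s.-1.
Proof.
rewrite /mu_large => mu_gt0 large.
set a := mv E T w u (A :&: Ev E u) in large; set b := mv E T w u (Ev E u) in large.
have b_gt0 : 0 < b.
  rewrite lt_def (le_trans (sumr_ge0 _ (fun t _ => wE_ge0 t)) (wS_le_mv u)) andbT.
  by apply: contraTneq large => ->; rewrite invr0 mulr0 -ltNge.
rewrite ler_pdivlMr // in large.
apply: le_trans (le_trans large (mv_le_wS (subsetIr A _))).
by rewrite ler_pM2l // wS_le_mv.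
Qed.

Lemma Ev_subset u : Ev E u \subset E.
Proof. by apply/subsetP => tau; rewrite inE => /andP[]. Qed.

Lemma gr_w_ge0 u v : 0 <= gr_w E T w u v.
Proof. by apply: sumr_ge0 => tau _; apply: wE_ge0. Qed.

Lemma card_edgeD1 tau v : tau \in E -> v \in tau -> #|tau :\ v| = k.-1.
Proof. by move=> tau_E v_tau; rewrite -(card_edge tau_E) (cardsD1 v tau) v_tau. Qed.

Lemma two_layer_s_gt1 tau : tau \in E -> (1 < s)%N.
Proof.
move=> tau_E; have /card_gt0P[v v_tau] : (0 < #|tau|)%N.
  by case: X_sys => [[_ k_gt0 _] _]; rewrite card_edge.
have [sigma sT tau_s] := edge_in_face tau_E.
by have := card_face_edges_through sT tau_s v_tau; lia.
Qed.

Lemma sum_wS_Ev B U : B \subset E ->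
  \sum_(u in U) wS T w (B :&: Ev E u) = \sum_(tau in B) wE T w tau *+ #|tau :&: U|.
Proof.
move=> BE; rewrite exchange_big_card [RHS]big_mkcond /=; apply: eq_bigr => tau _.
case: ifP => tau_B; last first.
  rewrite (_ : [set _ | _] = set0) ?cards0 //.
  by apply/setP => u; rewrite !inE tau_B andbF.
congr (_ *+ _); apply: eq_card => u.
by rewrite !inE tau_B (subsetP BE) //= andbC.
Qed.

Lemma gdeg_ground v : gdeg (gr_w E T w) [set: V] v = wS T w (Ev E v) *+ k.-1.
Proof.
rewrite /gdeg /gr_w exchange_big_card /wS -sumrMnl [RHS]big_mkcond /=.
apply: eq_bigr => tau _; rewrite inE.
case: ifP => [/andP[tau_E v_tau] | tau_nv]; last first.
  rewrite (_ : [set _ | _] = set0) ?cards0 //.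
  by apply/setP => u; rewrite !inE; apply/negbTE; apply: contraFN tau_nv => /and4P[_ -> ->].
rewrite -(card_edgeD1 tau_E v_tau); congr (_ *+ _).
by apply: eq_card => u; rewrite !inE tau_E v_tau andbC.
Qed.

Lemma gvol_ground : gvol (gr_w E T w) [set: V] [set: V] = wS T w E *+ (k * k.-1).
Proof.
rewrite /gvol; under eq_bigr do rewrite gdeg_ground -(setIidPr (Ev_subset _)).
rewrite sumrMnl sum_wS_Ev // mulrnA; congr (_ *+ _); rewrite -sumrMnl.
by apply: eq_bigr => tau tau_E; rewrite setIT card_edge.
Qed.

Lemma gcut_ground U :
  gcut (gr_w E T w) U U = \sum_(tau in E) wE T w tau *+ (#|tau :&: U| * #|tau :&: U|.-1).
Proof.
rewrite /gcut /gr_w; under eq_bigr do rewrite exchange_big_card.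
rewrite exchange_big [RHS]big_mkcond /=; apply: eq_bigr => tau _.
rewrite sumrMnr; case: ifP => tau_E; last first.
  rewrite big1 // => u _; rewrite (_ : [set _ | _] = set0) ?cards0 //.
  by apply/setP => v; rewrite !inE /= andbF.
congr (_ *+ _); rewrite (bigID (mem tau)) /= [X in (_ + X)%N]big1 ?addn0; last first.
  move=> u /andP[_ u_ntau]; apply/eqP; rewrite cards_eq0; apply/eqP/setP => v.
  by rewrite !inE (negbTE u_ntau) !andbF.
rewrite -sum_nat_const; apply: eq_big => [u | u /andP[u_U u_tau]].
  by rewrite !inE andbC.
rewrite (cardsD1 u (tau :&: U)) !inE u_U u_tau /=; apply: eq_card => v.
by rewrite !inE [u == v]eq_sym; case: (v \in U); case: (v \in tau); rewrite ?andbF ?andbT.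
Qed.

Section Moments.
Variables (A : {set {set V}}) (U : {set V}).

Definition moment (f : nat -> nat) : R := \sum_(tau in A) wE T w tau *+ f #|tau :&: U|.

Lemma moment_le f g : (forall n, f n <= g n)%N -> moment f <= moment g.
Proof.
by move=> fg; apply: ler_sum => tau _; apply: ler_wpMn2l; [apply: wE_ge0 | apply: fg].
Qed.

Lemma momentD f g : moment (fun n => f n + g n)%N = moment f + moment g.
Proof. by rewrite -big_split; apply: eq_bigr => tau _; rewrite mulrnDr. Qed.

Lemma moment1 : moment (fun=> 1%N) = wS T w A.
Proof. by apply: eq_bigr => tau _. Qed.

Lemma moment_id_le : moment id <= wS T w A + moment predn.
Proof. by rewrite -moment1 -momentD; apply: moment_le => n /=; lia. Qed.

Lemma moment_id_sqr_le :
  moment id ^+ 2 <= wS T w A * (moment (fun n => n * n.-1)%N + moment id).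
Proof.
rewrite -momentD; have := cauchy_schwarz_weighted (P := fun tau => tau \in A)
  (fun tau => #|tau :&: U|%:R) (fun tau _ => wE_ge0 tau).
congr (_ ^+ 2 <= _ * _); apply: eq_bigr => tau _; rewrite ?mulr_natr //.
by rewrite -natrX mulr_natr muln_pred_add.
Qed.

Lemma moment_predn_le g : (1 < s)%N -> 0 <= g -> g * s%:R <= 1 ->
  moment predn + g * (moment (fun n => n * n.-1)%N + moment id)
    <= moment (fun n => n * n.-1)%N + s%:R * g * wS T w A.
Proof.
move=> s_gt1 g_ge0 gs_le1; rewrite -momentD -moment1 !mulr_sumr -!big_split /=.
apply: ler_sum => tau _; rewrite -!(mulr_natr (wE T w tau)) mulr1.
have := ler_wpM2l (wE_ge0 tau) (predn_add_sqr_le #|tau :&: U| s_gt1 g_ge0 gs_le1).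
rewrite muln_pred_add => h; lra.
Qed.

Hypothesis A_sub : A \subset E.

Lemma card_edgeI_le tau : tau \in A -> (#|tau :&: U| <= k)%N.
Proof.
by move=> tau_A; rewrite -(card_edge (subsetP A_sub _ tau_A)) subset_leq_card ?subsetIl.
Qed.

Lemma sum_A_iU : \sum_(2 <= i < k.+1) (i%:R - 1) * wS T w (A_iU A U i) = moment predn.
Proof.
transitivity (\sum_(2 <= i < k.+1) \sum_(tau in A)
                 (if #|tau :&: U| == i then wE T w tau *+ i.-1 else 0)).
  apply: eq_big_nat => i /andP[i_ge2 _].
  rewrite -natr_pred ?(ltnW i_ge2) // mulr_natl -sumrMnl -big_mkcondr /=.
  by apply: eq_bigl => tau; rewrite inE.
rewrite exchange_big /=; apply: eq_bigr => tau tau_A.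
rewrite -big_mkcondr (eq_bigl _ _ (fun i => eq_sym _ i)) big_nat1_eq ltnS card_edgeI_le //.
by case: ifP => //; case: #|_| => [|[]].
Qed.

Lemma moment_predn_eq0 : (k <= 1)%N -> moment predn = 0.
Proof.
move=> k_le1; apply: big1 => tau tau_A.
by have := leq_trans (card_edgeI_le tau_A) k_le1; case: #|_| => [|[]].
Qed.

Lemma moment_pairs_le_gcut : moment (fun n => n * n.-1)%N <= gcut (gr_w E T w) U U.
Proof.
by rewrite gcut_ground; apply: ler_sum_subset A_sub _ => tau _; apply/mulrn_wge0/wE_ge0.
Qed.

Lemma gvol_large_le mu : 0 < mu -> (forall u, u \in U -> mu_large E T w A mu u) ->
  mu * gvol (gr_w E T w) [set: V] U <= moment id *+ (s.-1 * k.-1).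
Proof.
move=> mu_gt0 large; rewrite /moment -sum_wS_Ev // mulrnA -!sumrMnl mulr_sumr.
apply: ler_sum => u u_U; rewrite gdeg_ground mulrnAr; apply: ler_wMn2r.
exact: mu_large_wS mu_gt0 (large u u_U).
Qed.

Lemma moment_ge0 f : 0 <= moment f.
Proof. by apply: sumr_ge0 => tau _; apply/mulrn_wge0/wE_ge0. Qed.

Variables (lam mu : R).
Hypotheses (lam_ge0 : 0 <= lam) (expander : is_expander (gr_w E T w) [set: V] lam).
Hypotheses (mu_gt0 : 0 < mu) (U_large : forall u, u \in U -> mu_large E T w A mu u).

Let c0 := (s%:R - 1) * (k%:R - 1) / mu.
Let N := gvol (gr_w E T w) [set: V] [set: V].

Lemma moment_pairs_mixing :
  moment (fun n => n * n.-1)%N * N <= lam * (c0 * moment id) * N + (c0 * moment id) ^+ 2.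
Proof.
have [[s_gt0 k_gt0 _] _] := X_sys.
pose M := gvol (gr_w E T w) [set: V] U; set P := moment id.
have M_ge0 : 0 <= M := gvol_ge0 gr_w_ge0 U.
have N_ge0 : 0 <= N := gvol_ge0 gr_w_ge0 _.
have M_le : M <= c0 * P.
  have := gvol_large_le mu_gt0 U_large; rewrite -mulr_natl natrM !natr_pred // => large.
  by rewrite /c0 mulrAC ler_pdivlMr // mulrC.
apply: le_trans (ler_wpM2r N_ge0 moment_pairs_le_gcut) _.
apply: le_trans (expander_mixing gr_w_ge0 U lam_ge0 expander) _.
by apply: lerD; [rewrite ler_wpM2r // ler_wpM2l | apply: ler_pM].
Qed.

Lemma excess_le : (1 < s)%N -> A != set0 ->
  let gamma := s%:R * c0 ^+ 2 / (k%:R * (k%:R - 1)) in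
  let r := wS T w A / wS T w E in
  gamma * r <= 1 ->
  moment predn <= lam * c0 * (wS T w A + moment predn) + gamma * r * wS T w A.
Proof.
move=> s_gt1 A_neq0 gamma r gr_le1.
have [k_le1 | k_gt1] := leqP k 1.
  have k1 : k = 1%N by case: X_sys => [[_ k_gt0 _] _]; apply/eqP; rewrite eqn_leq k_le1.
  by rewrite moment_predn_eq0 // /gamma /c0 k1 subrr !(mulr0, mul0r, invr0, add0r).
set W := wS T w A; set WE := wS T w E; set Sw := moment predn.
set P := moment id; set Q := moment (fun n => n * n.-1)%N.
have W_gt0 : 0 < W := wS_gt0 A_sub A_neq0.
have WE_gt0 : 0 < WE := lt_le_trans W_gt0 (wS_subset A_sub).
have k_ge2 : 2 <= k%:R :> R by rewrite (ler_nat R 2).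
have N_eq : N = k%:R * (k%:R - 1) * WE.
  by rewrite /N gvol_ground -/WE -(mulr_natl WE) natrM natr_pred // ltnW.
have N_gt0 : 0 < N by rewrite N_eq !mulr_gt0 //; lra.
set h := c0 ^+ 2 / N.
have h_ge0 : 0 <= h by rewrite divr_ge0 ?sqr_ge0 ?ltW.
have gamma_r : s%:R * (h * W) = gamma * r.
  by rewrite /h /gamma /r -/W -/WE N_eq; field; rewrite !gt_eqF //; lra.
have predn_le : Sw + h * W * (Q + P) <= Q + s%:R * (h * W) * W.
  apply: (moment_predn_le s_gt1); first exact: mulr_ge0 h_ge0 (ltW W_gt0).
  by rewrite mulrC gamma_r.
have CS : h * P ^+ 2 <= h * (W * (Q + P)) := ler_wpM2l h_ge0 moment_id_sqr_le.
have Q_le : Q <= lam * c0 * P + h * P ^+ 2.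
  rewrite -(ler_pM2r N_gt0).
  have -> : (lam * c0 * P + h * P ^+ 2) * N = lam * (c0 * P) * N + (c0 * P) ^+ 2.
    by rewrite /h; field; rewrite gt_eqF.
  exact: moment_pairs_mixing.
have c0_ge0 : 0 <= c0.
  by rewrite /c0 divr_ge0 ?(ltW mu_gt0) // mulr_ge0 // subr_ge0 ler1n ltnW.
have P_le : lam * c0 * P <= lam * c0 * (W + Sw).
  by apply: ler_wpM2l; [apply: mulr_ge0 | apply: moment_id_le].
rewrite -gamma_r; lra.
Qed.

End Moments.

End TwoLayerSystem.

Lemma excess_constants_le (R : realFieldType) (S Kr mu : R) :
  2 <= S -> 1 <= Kr -> 0 < mu ->
  (S - 1) * (Kr - 1) / mu <= S * (S - 1) * (Kr - 1) / (2 * mu) /\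
  S * ((S - 1) * (Kr - 1) / mu) ^+ 2 / (Kr * (Kr - 1))
    <= S ^+ 3 * (S - 1) ^+ 2 / (4 * mu ^+ 2).
Proof.
move=> S_ge2 Kr_ge1 mu_gt0.
have c0_ge0 : 0 <= (S - 1) * (Kr - 1) / mu.
  by rewrite divr_ge0 ?(ltW mu_gt0) // mulr_ge0 //; lra.
split.
  have -> : S * (S - 1) * (Kr - 1) / (2 * mu) = S / 2 * ((S - 1) * (Kr - 1) / mu).
    by field; rewrite gt_eqF.
  by rewrite ler_peMl // ler_pdivlMr //; lra.
have [-> | Kr_neq1] := eqVneq Kr 1.
  by rewrite subrr !(mulr0, mul0r, expr0n) /= divr_ge0 ?mulr_ge0 ?exprn_ge0 //; lra.
have -> : S * ((S - 1) * (Kr - 1) / mu) ^+ 2 / (Kr * (Kr - 1))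
    = S * (S - 1) ^+ 2 / mu ^+ 2 * ((Kr - 1) / Kr).
  by field; rewrite gt_eqF ?subr_eq0 ?Kr_neq1 //=; lra.
have -> : S ^+ 3 * (S - 1) ^+ 2 / (4 * mu ^+ 2) = S * (S - 1) ^+ 2 / mu ^+ 2 * (S ^+ 2 / 4).
  by field; rewrite gt_eqF.
apply: ler_wpM2l; first by rewrite divr_ge0 ?sqr_ge0 // mulr_ge0 ?sqr_ge0 //; lra.
rewrite ler_pdivrMr; last lra.
rewrite mulrAC ler_pdivlMr //.
have : 0 <= (S ^+ 2 - 4) * Kr by rewrite mulr_ge0 //; nra.
lra.
Qed.

Lemma excess_ratio_le (R : realFieldType) (c0 c gamma D lam r W Sw : R) :
  0 < W -> 0 <= lam -> 0 <= r -> 0 <= Sw -> c0 <= c -> gamma <= D ->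
  Sw <= lam * c0 * (W + Sw) + gamma * r * W ->
  (1 - c * lam) * (Sw / W) <= c * lam + D * r.
Proof.
move=> W_gt0 lam_ge0 r_ge0 Sw_ge0 c0_le gamma_le Sw_le.
have c0_term : lam * c0 * (W + Sw) <= c * lam * (W + Sw).
  by apply: ler_wpM2r; [lra | rewrite [lam * c0]mulrC; apply: ler_wpM2r].
have gamma_term : gamma * r * W <= D * r * W.
  by apply: ler_wpM2r; [exact: ltW | exact: ler_wpM2r].
rewrite -(ler_pM2r W_gt0).
have -> : (1 - c * lam) * (Sw / W) * W = (1 - c * lam) * Sw by field; rewrite gt_eqF.
lra.
Qed.

Theorem lemma4p9 (R : realFieldType) (V : finType) (s k K : nat)
    (E : {set {set V}}) (T : {set {set {set V}}}) (w : {set {set V}} -> R)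
    (lam mu : R) (A : {set {set V}}) (U : {set V}) :
  two_layer_system s k K E T ->
  (forall sigma, sigma \in T -> 0 < w sigma) ->
  0 <= lam ->
  is_expander (gr_w E T w) [set: V] lam ->
  A \subset E -> A != set0 ->
  0 < mu -> mu < 1 ->
  (forall u, u \in U -> mu_large E T w A mu u) ->
  wS T w A / wS T w E <= 4 * mu ^+ 2 / (s%:R ^+ 3 * (s%:R - 1) ^+ 2) ->
  (s%:R * (s%:R - 1) * (k%:R - 1)) / (2 * mu) * lam
    + (s%:R ^+ 3 * (s%:R - 1) ^+ 2) / (4 * mu ^+ 2) * (wS T w A / wS T w E)
  >= (1 - (s%:R * (s%:R - 1) * (k%:R - 1)) / (2 * mu) * lam)
     * \sum_(2 <= i < k.+1) (i%:R - 1) * (wS T w (A_iU A U i) / wS T w A).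
Proof.
move=> X_sys w_gt0 lam_ge0 expander A_sub A_neq0 mu_gt0 _ U_large small.
have W_gt0 := wS_gt0 X_sys w_gt0 A_sub A_neq0.
have r_ge0 : 0 <= wS T w A / wS T w E by rewrite divr_ge0 ?wS_ge0.
have s_gt1 : (1 < s)%N.
  by have /set0Pn[tau /(subsetP A_sub)/(two_layer_s_gt1 X_sys)] := A_neq0.
have s_ge2 : 2 <= s%:R :> R by rewrite (ler_nat R 2).
have k_ge1 : 1 <= k%:R :> R by rewrite ler1n; case: X_sys => [[]].
have [c0_le gamma_le] := excess_constants_le s_ge2 k_ge1 mu_gt0.
have D_gt0 : 0 < s%:R ^+ 3 * (s%:R - 1) ^+ 2 / (4 * mu ^+ 2).
  by rewrite divr_gt0 ?mulr_gt0 ?exprn_gt0 //; lra.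
have D_r_le1 : s%:R ^+ 3 * (s%:R - 1) ^+ 2 / (4 * mu ^+ 2) * (wS T w A / wS T w E) <= 1.
  by rewrite -ler_pdivlMl // mulr1 invf_div.
under eq_bigr do rewrite mulrA; rewrite -mulr_suml (sum_A_iU w X_sys U A_sub).
apply: (excess_ratio_le W_gt0 lam_ge0 r_ge0 (moment_ge0 w_gt0 A U predn) c0_le gamma_le).
apply: (excess_le X_sys) => //; apply: (le_trans _ D_r_le1).
by apply: ler_wpM2r.
Qed.
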